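(* Let $N=\overline{\{\langle f,g\rangle\in G(1,9): R(f,g,-)=0\}}\subset G(1,9)$. Regarding $G(1,9)$ in its Plücker embedding in $\mathbb{P}(\bigwedge^2\mathrm{Sym}^3\mathbb{C}^3)$ with affine cone $\widehat{G(1,9)}$, and using the $SL(3)$-decomposition $\bigwedge^2(\mathrm{Sym}^3\mathbb{C}^3)=\mathbb{S}_{(5,1)}\mathbb{C}^3\oplus\mathbb{S}_{(3,3)}\mathbb{C}^3$, one has $\mathbb{P}\left(\widehat{G(1,9)}\cap\mathbb{S}_{(5,1)}\mathbb{C}^3\right)=N$.
   Context: Plane cubics up to scalar are points of $\mathbb{P}^9=\mathbb{P}(\mathrm{Sym}^3\mathbb{C}^3)$; $G(1,9)$ is the Grassmannian of lines in $\mathbb{P}^9$; $\langle f,g\rangle$ is the line spanned by cubics $f,g$. $R$ is the alternating trilinear form on $\mathrm{Sym}^3\mathbb{C}^3$ determined by $R(l^3,m^3,n^3)=(\det(l,m,n))^3$ for linear forms $l,m,n$; $R(f,g,-)=0$ means $R(f,g,c)=0$ for all cubics $c$. $\mathbb{S}_{(5,1)}\mathbb{C}^3$ and $\mathbb{S}_{(3,3)}\mathbb{C}^3$ are the irreducible $SL(3)$-summands (Schur modules) of dimensions $35$ and $10$ respectively. *)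

From HB Require Import structures.
From mathcomp Require Import all_boot all_order all_algebra.
From mathcomp Require Import complex.
From mathcomp Require Import Rstruct.
From mathcomp Require Import mpoly.
Set Implicit Arguments. Unset Strict Implicit. Unset Printing Implicit Defensive.
Import GRing.Theory.
Local Open Scope ring_scope.

Definition CC : Type := Rdefinitions.R[i].

Definition is_cubic (f : {mpoly CC[3]}) : Prop := f \is 3.-homog.

Definition linform (l : 'rV[CC]_3) : {mpoly CC[3]} := \sum_(i < 3) l 0 i *: 'X_i.

Definition det3 (l m n : 'rV[CC]_3) : CC :=
  \det (\matrix_(i < 3, j < 3) (nth 0 [:: l; m; n] i) 0 j).

Definition is_R (R : {mpoly CC[3]} -> {mpoly CC[3]} -> {mpoly CC[3]} -> CC) : Prop :=
  [/\ (forall a f f' g h, is_cubic f -> is_cubic f' -> is_cubic g -> is_cubic h ->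
         R (a *: f + f') g h = a * R f g h + R f' g h),
      (forall a f g g' h, is_cubic f -> is_cubic g -> is_cubic g' -> is_cubic h ->
         R f (a *: g + g') h = a * R f g h + R f g' h),
      (forall a f g h h', is_cubic f -> is_cubic g -> is_cubic h -> is_cubic h' ->
         R f g (a *: h + h') = a * R f g h + R f g h'),
      (forall f g, is_cubic f -> is_cubic g ->
         [/\ R f f g = 0, R f g f = 0 & R g f f = 0]) &
      (forall l m n : 'rV[CC]_3,
         R (linform l ^+ 3) (linform m ^+ 3) (linform n ^+ 3) = det3 l m n ^+ 3)].

Definition R_vanishes (R : {mpoly CC[3]} -> {mpoly CC[3]} -> {mpoly CC[3]} -> CC)
  (f g : {mpoly CC[3]}) : Prop :=
  forall h, is_cubic h -> R f g h = 0.

(* f, g linearly independent, i.e. they span a line <f,g> of P^9. *)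
Definition indep (f g : {mpoly CC[3]}) : Prop :=
  forall a b : CC, a *: f + b *: g = 0 -> a = 0 /\ b = 0.

(* Model of /\^2 Sym^3 C^3: polynomials in x_0,x_1,x_2,y_0,y_1,y_2 (variables
   0,1,2 and 3,4,5), via f /\ g |-> f(x) g(y) - g(x) f(y) (an injective linear,
   SL(3)-equivariant map /\^2 Sym^3 -> Sym^3 (x) Sym^3). *)
Definition inx (f : {mpoly CC[3]}) : {mpoly CC[6]} :=
  f \mPo [tuple ('X_(lshift 3 i) : {mpoly CC[6]}) | i < 3].
Definition iny (f : {mpoly CC[3]}) : {mpoly CC[6]} :=
  f \mPo [tuple ('X_(rshift 3 i) : {mpoly CC[6]}) | i < 3].
Definition wedge (f g : {mpoly CC[3]}) : {mpoly CC[6]} :=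
  inx f * iny g - inx g * iny f.

Definition in_Lambda2 (p : {mpoly CC[6]}) : Prop :=
  exists (k : nat) (a b : 'I_k -> {mpoly CC[3]}),
    (forall i, is_cubic (a i) /\ is_cubic (b i)) /\ p = \sum_(i < k) wedge (a i) (b i).

(* Action of M in GL(3) (we use M in SL(3)) on /\^2 Sym^3 C^3 induced by the
   substitution x |-> M x (and y |-> M y): f /\ g |-> (f o M) /\ (g o M). *)
Definition act2 (M : 'M[CC]_3) (p : {mpoly CC[6]}) : {mpoly CC[6]} :=
  p \mPo [tuple (match split (i : 'I_(3 + 3)) with
                 | inl a => \sum_(j < 3) M a j *: 'X_(lshift 3 j)
                 | inr a => \sum_(j < 3) M a j *: 'X_(rshift 3 j)
                 end : {mpoly CC[6]}) | i < 6].

Definition lin_subspace (U : {mpoly CC[6]} -> Prop) : Prop :=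
  U 0 /\ (forall (a : CC) u v, U u -> U v -> U (a *: u + v)).

Definition has_dim (U : {mpoly CC[6]} -> Prop) (d : nat) : Prop :=
  exists b : 'I_d -> {mpoly CC[6]},
    (forall c : 'I_d -> CC, \sum_(i < d) c i *: b i = 0 -> forall i, c i = 0) /\
    (forall p, U p <-> exists c : 'I_d -> CC, p = \sum_(i < d) c i *: b i).

Definition SL3_invariant (U : {mpoly CC[6]} -> Prop) : Prop :=
  forall M : 'M[CC]_3, \det M = 1 -> forall u, U u -> U (act2 M u).

Definition SL3_irreducible (U : {mpoly CC[6]} -> Prop) : Prop :=
  (exists u, U u /\ u <> 0) /\
  forall V : {mpoly CC[6]} -> Prop, lin_subspace V -> SL3_invariant V ->
    (forall v, V v -> U v) -> (forall v, V v -> v = 0) \/ (forall u, U u <-> V u).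

(* W is the summand S_(5,1) C^3 of /\^2 Sym^3 C^3: the irreducible
   SL(3)-submodule of dimension 35. *)
Definition is_S51 (W : {mpoly CC[6]} -> Prop) : Prop :=
  [/\ forall w, W w -> in_Lambda2 w, has_dim W 35, SL3_invariant W & SL3_irreducible W].

(* Zariski closure in G(1,9), in its Pluecker embedding: the line <f0,g0>
   lies in the closure N of {<f,g> : R(f,g,-)=0} iff every polynomial in the
   (Pluecker) coordinates of /\^2 Sym^3 C^3 vanishing on all f /\ g with
   R(f,g,-) = 0 vanishes at f0 /\ g0.  Coordinates are coefficients p@_m. *)
Definition in_N (R : {mpoly CC[3]} -> {mpoly CC[3]} -> {mpoly CC[3]} -> CC)
  (f0 g0 : {mpoly CC[3]}) : Prop :=
  forall (k : nat) (ms : 'I_k -> 'X_{1..6}) (P : {mpoly CC[k]}),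
    (forall f g, is_cubic f -> is_cubic g -> indep f g -> R_vanishes R f g ->
       P.@[fun i => (wedge f g)@_(ms i)] = 0) ->
    P.@[fun i => (wedge f0 g0)@_(ms i)] = 0.

(* Let Phi : Λ² Sym³ -> (Sym³)^* be the linear map f ∧ g |-> 2 R(f, g, -), so that
   R(f, g, -) = 0 iff f ∧ g lies in ker Phi.  Checking it on cubes of linear forms, which
   span the cubics, gives R(f∘M, g∘M, h∘M) = det(M)³ R(f, g, h), hence ker Phi ∩ W is an
   SL(3)-submodule of the irreducible W.  It is not 0 because dim W = 35 > 10, so W ⊆ ker Phi.
   Since R(l³, m³, h) = h(l × m), every point is a cross product, and no nonzero cubic
   vanishes at ten suitable points, Phi is onto; so ker Phi has dimension 45 - 10 = 35 and
   W = ker Phi.  Thus the Plücker point of <f, g> lies in W iff R(f, g, -) = 0, a condition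
   given by linear forms in the Plücker coordinates: the set of such lines is already
   Zariski closed, and equals N. *)

From Pilot Require Import Defs.
From HB Require Import structures.
From mathcomp Require Import all_boot all_order all_algebra.
From mathcomp Require Import complex Rstruct mpoly.
From mathcomp Require Import zify ring.
Set Implicit Arguments. Unset Strict Implicit. Unset Printing Implicit Defensive.
Import GRing.Theory Num.Theory.
Local Open Scope ring_scope.

Definition o1 : 'I_3 := Ordinal (isT : 1 < 3)%N.
Definition o2 : 'I_3 := Ordinal (isT : 2 < 3)%N.

Lemma sum3 (V : nmodType) (F : 'I_3 -> V) : \sum_(i < 3) F i = F ord0 + F o1 + F o2.
Proof. by rewrite !big_ord_recr big_ord0 /= add0r; congr (F _ + F _ + F _); apply: val_inj. Qed.

Lemma prod3 (V : pzSemiRingType) (F : 'I_3 -> V) : \prod_(i < 3) F i = F ord0 * F o1 * F o2.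
Proof. by rewrite !big_ord_recr big_ord0 /= mul1r; congr (F _ * F _ * F _); apply: val_inj. Qed.

Lemma fun3P (T : Type) (f g : 'I_3 -> T) :
  f ord0 = g ord0 -> f o1 = g o1 -> f o2 = g o2 -> f =1 g.
Proof.
move=> e0 e1 e2 [[|[|[|//]]] lt_i3].
- by rewrite (_ : Ordinal _ = ord0) //; exact: val_inj.
- by rewrite (_ : Ordinal _ = o1) //; exact: val_inj.
- by rewrite (_ : Ordinal _ = o2) //; exact: val_inj.
Qed.

Lemma mnm3P (m m' : 'X_{1..3}) :
  m ord0 = m' ord0 -> m o1 = m' o1 -> m o2 = m' o2 -> m = m'.
Proof. by move=> e0 e1 e2; apply/mnmP; apply: fun3P. Qed.

Lemma det_mx33 (R : comNzRingType) (A : 'M[R]_3) : \det A =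
  A ord0 ord0 * (A o1 o1 * A o2 o2 - A o1 o2 * A o2 o1)
  - A ord0 o1 * (A o1 ord0 * A o2 o2 - A o1 o2 * A o2 ord0)
  + A ord0 o2 * (A o1 ord0 * A o2 o1 - A o1 o1 * A o2 ord0).
Proof.
pose a (i j : nat) := A (inord i) (inord j).
have aE (i j : 'I_3) : A i j = a i j by rewrite /a !inord_val.
rewrite (expand_det_row _ ord0) sum3 /cofactor !(expand_det_row _ ord0).
by rewrite !big_ord_recr !big_ord0 /cofactor !det_mx11 !mxE !aE /a /=; ring.
Qed.

Lemma comp_mpolyA (R : comNzRingType) (n k l : nat) (p : {mpoly R[n]})
  (lq : n.-tuple {mpoly R[k]}) (lr : k.-tuple {mpoly R[l]}) :
  (p \mPo lq) \mPo lr = p \mPo [tuple (tnth lq i \mPo lr) | i < n].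
Proof.
rewrite [p \mPo lq]comp_mpolyE [RHS]comp_mpolyE raddf_sum /=; apply: eq_bigr => m _.
rewrite comp_mpolyZ rmorph_prod /=; congr (_ *: _); apply: eq_bigr => i _.
by rewrite rmorphXn tnth_mktuple.
Qed.

Lemma sub_ker_of_rank (F : fieldType) m n p (B : 'M[F]_(m, n)) (A : 'M[F]_(n, p)) :
  row_free B -> B *m A = 0 -> row_full A -> (m + p)%N = n ->
  forall c : 'rV[F]_n, c *m A = 0 -> (c <= B)%MS.
Proof.
move=> freeB BA0 fullA dim_n c cA0.
have sB_ker : (B <= kermx A)%MS by apply/sub_kermxP.
have rank_ker : \rank (kermx A) = m by rewrite mxrank_ker (eqP fullA) -dim_n addnK.
have [_ /esym] := mxrank_leqif_sup sB_ker; rewrite (eqP freeB) rank_ker eqxx => sker_B.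
by apply: submx_trans sker_B; apply/sub_kermxP.
Qed.

Definition cubic_exps : seq (nat * nat * nat) :=
  [:: (3, 0, 0); (0, 3, 0); (0, 0, 3); (2, 1, 0); (1, 2, 0);
      (2, 0, 1); (1, 0, 2); (0, 2, 1); (0, 1, 2); (1, 1, 1)]%N.

Definition cexp (k : nat) : nat * nat * nat := nth (0, 0, 0)%N cubic_exps k.

Definition cmon (k : nat) : 'X_{1..3} :=
  let: (a, b, c) := cexp k in [multinom nth 0%N [:: a; b; c] j | j < 3].

Lemma cmonE k : cexp k = (cmon k ord0, cmon k o1, cmon k o2).
Proof. by rewrite /cmon; case: (cexp k) => [[a b] c]; rewrite !mnmE. Qed.

Lemma cexp_inj : injective (fun i : 'I_10 => cexp i).
Proof. by move=> i j /eqP; rewrite nth_uniq // => /eqP /val_inj. Qed.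

Lemma cmon_inj : injective (fun i : 'I_10 => cmon i).
Proof. by move=> i j eq_ij; apply: cexp_inj; rewrite !cmonE eq_ij. Qed.

Lemma mdeg3 (m : 'X_{1..3}) : mdeg m = (m ord0 + m o1 + m o2)%N.
Proof. by rewrite mdegE sum3. Qed.

Lemma mdeg_cmon (i : 'I_10) : mdeg (cmon i) = 3%N.
Proof.
have /allP/(_ (cexp i)) : all (fun e => e.1.1 + e.1.2 + e.2 == 3)%N cubic_exps by [].
by rewrite mem_nth // cmonE mdeg3 => /(_ isT)/eqP.
Qed.

Lemma cubic_exps_complete : all (fun a => all (fun b => all (fun c =>
  (a + b + c != 3) || ((a, b, c) \in cubic_exps)) (iota 0 4)) (iota 0 4)) (iota 0 4).
Proof. by []. Qed.

Lemma cmon_surj (m : 'X_{1..3}) : mdeg m = 3%N -> exists i : 'I_10, m = cmon i.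
Proof.
rewrite mdeg3 => deg_m.
have : (m ord0 + m o1 + m o2 != 3)%N || ((m ord0, m o1, m o2) \in cubic_exps).
  move/allP: cubic_exps_complete => /(_ (m ord0)); rewrite mem_iota => /(_ ltac:(lia)).
  move=> /allP/(_ (m o1)); rewrite mem_iota => /(_ ltac:(lia)).
  by move=> /allP/(_ (m o2)); rewrite mem_iota; apply; lia.
rewrite deg_m /= => in_exps.
have lt_idx : (index (m ord0, m o1, m o2) cubic_exps < 10)%N by rewrite index_mem.
exists (Ordinal lt_idx); have := cmonE (Ordinal lt_idx).
by rewrite /cexp /= nth_index // => -[e0 e1 e2]; apply: mnm3P.
Qed.

Lemma split_lshift (i : 'I_3) : split (lshift 3 i) = inl i.
Proof. exact: (@unsplitK 3 3 (inl i)). Qed.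

Lemma split_rshift (i : 'I_3) : split (rshift 3 i) = inr i.
Proof. exact: (@unsplitK 3 3 (inr i)). Qed.

Definition xmon (m : 'X_{1..3}) : 'X_{1..6} :=
  [multinom if split (i : 'I_(3 + 3)) is inl a then m a else 0%N | i < 6].
Definition ymon (m : 'X_{1..3}) : 'X_{1..6} :=
  [multinom if split (i : 'I_(3 + 3)) is inr a then m a else 0%N | i < 6].

Definition cmon2 (i j : 'I_10) : 'X_{1..6} := (xmon (cmon i) + ymon (cmon j))%MM.

Lemma cmon2_inj i j i' j' : cmon2 i j = cmon2 i' j' -> i = i' /\ j = j'.
Proof.
move=> /mnmP eq_m; split; apply: cmon_inj; apply/mnmP => k.
  by have := eq_m (lshift 3 k); rewrite !mnmDE !mnmE split_lshift !addn0.
by have := eq_m (rshift 3 k); rewrite !mnmDE !mnmE split_rshift !add0n.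
Qed.

Definition upper_pairs : seq (nat * nat) :=
  [seq p <- [seq (i, j) | i <- iota 0 10, j <- iota 0 10] | (p.1 < p.2)%N].

Lemma size_upper_pairs : size upper_pairs = 45%N.
Proof. by []. Qed.

Lemma upper_pairs_index (i j : 'I_10) : (i < j)%N ->
  exists e : 'I_45, nth (0, 0)%N upper_pairs e = (i : nat, j : nat).
Proof.
move=> lt_ij; have mem_ij : (i : nat, j : nat) \in upper_pairs.
  by rewrite mem_filter lt_ij; apply/allpairsP; exists (i : nat, j : nat); rewrite !mem_iota /=.
have lt_e : (index (i : nat, j : nat) upper_pairs < 45)%N by rewrite -size_upper_pairs index_mem.
by exists (Ordinal lt_e); rewrite nth_index.
Qed.

(* [linformK], [det3K], [inxK], [inyK], [wedgeK], [act2K] and [is_RK] below are the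
   definitions of Defs over an arbitrary numFieldType K; for K = CC they unfold to them.
   Working over an abstract field keeps rewriting and kernel conversion from computing
   with the concrete real and complex numbers. *)
Section CubicForms.
Variable K : numFieldType.
Implicit Types (f g h : {mpoly K[3]}) (l m n : 'rV[K]_3).

Lemma cubicE f : f \is 3.-homog -> f = \sum_(i < 10) f@_(cmon i) *: 'X_[cmon i].
Proof.
move=> cubic_f; apply/mpolyP => m; rewrite raddf_sum /=.
under eq_bigr do rewrite mcoeffZ mcoeffX.
have [/eqP/cmon_surj [i ->]|deg_m] := boolP (mdeg m == 3%N).
  rewrite (bigD1 i) //= eqxx mulr1 big1 ?addr0 // => j /negbTE.
  by rewrite (inj_eq cmon_inj) => ->; rewrite mulr0.
rewrite (dhomog_nemf_coeff cubic_f deg_m) big1 // => j _.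
by case: eqP => [eq_jm|]; [move: deg_m; rewrite -eq_jm mdeg_cmon | rewrite mulr0].
Qed.

Lemma cubic_cmon (i : 'I_10) : ('X_[cmon i] : {mpoly K[3]}) \is 3.-homog.
Proof. by rewrite dhomogX; apply/eqP; apply: mdeg_cmon. Qed.

Lemma meval_cmon k (w : 'I_3 -> K) :
  'X_[cmon k].@[w] = let: (a, b, c) := cexp k in w ord0 ^+ a * w o1 ^+ b * w o2 ^+ c.
Proof. by rewrite mevalX prod3 cmonE. Qed.

Lemma cmonX k : 'X_[cmon k] =
  let: (a, b, c) := cexp k in 'X_ord0 ^+ a * 'X_o1 ^+ b * 'X_o2 ^+ c :> {mpoly K[3]}.
Proof. by rewrite mpolyXE_id prod3 cmonE. Qed.

Lemma sum_cmon_meval (c : nat -> K) (w : 'I_3 -> K) :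
  \sum_(i < 10) c i * 'X_[cmon i].@[w] =
    c 0 * w ord0 ^+ 3 + c 1 * w o1 ^+ 3 + c 2 * w o2 ^+ 3
    + c 3 * (w ord0 ^+ 2 * w o1) + c 4 * (w ord0 * w o1 ^+ 2)
    + c 5 * (w ord0 ^+ 2 * w o2) + c 6 * (w ord0 * w o2 ^+ 2)
    + c 7 * (w o1 ^+ 2 * w o2) + c 8 * (w o1 * w o2 ^+ 2) + c 9 * (w ord0 * w o1 * w o2).
Proof. by rewrite !big_ord_recr big_ord0 /= !meval_cmon /=; ring. Qed.

Definition vec3 (a b c : K) : 'rV[K]_3 := \row_(j < 3) nth 0 [:: a; b; c] j.

Definition node (k : nat) : 'rV[K]_3 := nth 0
  [:: vec3 1 0 0; vec3 0 1 0; vec3 0 0 1; vec3 1 1 0; vec3 1 (-1) 0;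
      vec3 1 0 1; vec3 1 0 (-1); vec3 0 1 1; vec3 0 1 (-1); vec3 1 1 1] k.

Lemma nodes_unisolvent (c : nat -> K) :
  (forall k : 'I_10, \sum_(i < 10) c i * 'X_[cmon i].@[node k 0] = 0) ->
  forall i : 'I_10, c i = 0.
Proof.
move=> vanish; pose v k := \sum_(i < 10) c i * 'X_[cmon i].@[node k 0].
have v0 k : (k < 10)%N -> v k = 0 by move=> lt_k; exact: (vanish (Ordinal lt_k)).
have combo (i : 'I_10) : c i = nth 0
  [:: v 0; v 1; v 2; (v 3 - v 4) / 2%:R - v 1; (v 3 + v 4) / 2%:R - v 0;
      (v 5 - v 6) / 2%:R - v 2; (v 5 + v 6) / 2%:R - v 0;
      (v 7 - v 8) / 2%:R - v 2; (v 7 + v 8) / 2%:R - v 1;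
      v 9 - v 3 - v 5 - v 7 + v 0 + v 1 + v 2] i.
  have two_ne0 : (2%:R : K) != 0 by rewrite pnatr_eq0.
  rewrite /v !sum_cmon_meval /= !mxE /=.
  by case: i => -[|[|[|[|[|[|[|[|[|[|//]]]]]]]]]] ? /=; field.
move=> i; rewrite combo.
by case: i => -[|[|[|[|[|[|[|[|[|[|//]]]]]]]]]] ? /=; rewrite !v0 //; ring.
Qed.

Definition node_mx : 'M[K]_10 := \matrix_(k < 10, i < 10) 'X_[cmon i].@[node k 0].

Lemma node_mx_unit : node_mx \in unitmx.
Proof.
rewrite -unitmx_tr -row_free_unit; apply/inj_row_free => y yN0; apply/rowP => i.
rewrite mxE; suff /(_ i) : forall j : 'I_10, y 0 (inord j) = 0 by rewrite inord_val.
apply: (@nodes_unisolvent (fun j => y 0 (inord j))) => k.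
have := congr1 (fun r : 'rV[K]_10 => r 0 k) yN0; rewrite !mxE => yNk.
by rewrite -[RHS]yNk; apply: eq_bigr => j _; rewrite !mxE inord_val.
Qed.

Definition linformK l : {mpoly K[3]} := \sum_(i < 3) l 0 i *: 'X_i.
Definition det3K l m n : K := \det (\matrix_(i < 3, j < 3) (nth 0 [:: l; m; n] i) 0 j).

(* [cmult i] is the multinomial coefficient 3!/(a! b! c!) of x^a y^b z^c = [cmon i]. *)
Definition cmult (k : nat) : nat := nth 0%N [:: 1; 1; 1; 3; 3; 3; 3; 3; 3; 6]%N k.

Lemma linform_cube l :
  linformK l ^+ 3 = \sum_(i < 10) ((cmult i)%:R * 'X_[cmon i].@[l 0]) *: 'X_[cmon i].
Proof.
rewrite /linformK sum3 !big_ord_recr big_ord0 /= !meval_cmon !cmonX /cmult /=.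
rewrite -!mul_mpolyC !mpolyCM !mpolyC_nat !expr0 !expr1 !rmorph1.
ring.
Qed.

Lemma cubic_linform_cube l : linformK l ^+ 3 \is 3.-homog.
Proof. by rewrite linform_cube; apply: rpred_sum => i _; apply/rpredZ/cubic_cmon. Qed.

Definition cube (k : nat) : {mpoly K[3]} := linformK (node k) ^+ 3.

Lemma cmult_neq0 (i : 'I_10) : (cmult i)%:R != 0 :> K.
Proof. by rewrite pnatr_eq0; case: i => -[|[|[|[|[|[|[|[|[|[|//]]]]]]]]]]. Qed.

Lemma cube_span h : h \is 3.-homog ->
  exists c : 'I_10 -> K, h = \sum_(k < 10) c k *: cube k.
Proof.
(* The coefficient matrix of the ten cubes is [node_mx] with columns scaled by [cmult]. *)
move=> ch; pose d : 'rV[K]_10 := \row_i (h@_(cmon i) / (cmult i)%:R).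
exists (fun k => (d *m invmx node_mx) 0 k); rewrite [LHS](cubicE ch).
under [RHS]eq_bigr => k _ do rewrite /cube linform_cube scaler_sumr.
rewrite exchange_big; apply: eq_bigr => i _ /=.
under eq_bigr => k _ do rewrite scalerA; rewrite -scaler_suml; congr (_ *: _).
transitivity ((cmult i)%:R * (d *m invmx node_mx *m node_mx) 0 i).
  by rewrite mulmxKV ?node_mx_unit // mxE mulrC divfK ?cmult_neq0.
by rewrite mxE mulr_sumr; apply: eq_bigr => k _; rewrite [node_mx _ _]mxE mulrCA.
Qed.

Definition subst_mx (M : 'M[K]_3) f : {mpoly K[3]} :=
  f \mPo [tuple (\sum_(j < 3) M a j *: 'X_j : {mpoly K[3]}) | a < 3].

Lemma subst_mx_sum (M : 'M[K]_3) (I : Type) (r : seq I) (c : I -> K)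
  (F : I -> {mpoly K[3]}) :
  subst_mx M (\sum_(i <- r) c i *: F i) = \sum_(i <- r) c i *: subst_mx M (F i).
Proof. by rewrite /subst_mx raddf_sum; apply: eq_bigr => i _ /=; rewrite comp_mpolyZ. Qed.

Lemma subst_mx_linform (M : 'M[K]_3) l : subst_mx M (linformK l) = linformK (l *m M).
Proof.
rewrite /linformK subst_mx_sum.
under eq_bigr => a _ do rewrite /subst_mx comp_mpolyXU -tnth_nth tnth_mktuple scaler_sumr.
rewrite exchange_big; apply: eq_bigr => j _; rewrite mxE scaler_suml.
by apply: eq_bigr => a _; rewrite scalerA.
Qed.

Lemma subst_mx_cube (M : 'M[K]_3) l :
  subst_mx M (linformK l ^+ 3) = linformK (l *m M) ^+ 3.
Proof. by rewrite /subst_mx rmorphXn /= -/(subst_mx M _) subst_mx_linform. Qed.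

Lemma subst_mx_cubic (M : 'M[K]_3) f : f \is 3.-homog -> subst_mx M f \is 3.-homog.
Proof.
move=> /cube_span [c ->]; rewrite subst_mx_sum; apply: rpred_sum => k _.
by rewrite rpredZ // subst_mx_cube cubic_linform_cube.
Qed.

Lemma subst_mx_surj (M : 'M[K]_3) h : M \in unitmx -> h \is 3.-homog ->
  exists2 h', h' \is 3.-homog & h = subst_mx M h'.
Proof.
move=> unitM /cube_span [c ->].
exists (\sum_(k < 10) c k *: linformK (node k *m invmx M) ^+ 3).
  by apply: rpred_sum => k _; rewrite rpredZ // cubic_linform_cube.
by rewrite subst_mx_sum; apply: eq_bigr => k _; rewrite subst_mx_cube -mulmxA mulVmx ?mulmx1.
Qed.

Lemma det3_mulmx (M : 'M[K]_3) l m n :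
  det3K (l *m M) (m *m M) (n *m M) = det3K l m n * \det M.
Proof.
rewrite /det3K -det_mulmx; congr (\det _); apply/matrixP => i j; rewrite !mxE.
by case: i => -[|[|[|//]]] ? /=; rewrite mxE; apply: eq_bigr => k _; rewrite mxE.
Qed.

Definition cross (l m : 'rV[K]_3) (j : 'I_3) : K := nth 0
  [:: l 0 o1 * m 0 o2 - l 0 o2 * m 0 o1; l 0 o2 * m 0 ord0 - l 0 ord0 * m 0 o2;
      l 0 ord0 * m 0 o1 - l 0 o1 * m 0 ord0] j.

Lemma det3_cross l m n : det3K l m n = (linformK n).@[cross l m].
Proof.
rewrite /linformK raddf_sum sum3 /= !mevalZ !mevalXU /det3K det_mx33 !mxE /cross /=.
ring.
Qed.

Lemma cross_surj (w : 'I_3 -> K) : exists l m, cross l m =1 w.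
Proof.
have [w0|w0] := eqVneq (w ord0) 0.
  exists (vec3 1 0 0), (vec3 0 (w o2) (- w o1)).
  by apply: fun3P; rewrite /cross /= !mxE /= ?w0; ring.
exists (vec3 (w o1 / w ord0) (-1) 0), (vec3 (w o2) 0 (- w ord0)).
by apply: fun3P; rewrite /cross /= !mxE /=; field.
Qed.

Definition inxK f : {mpoly K[6]} := f \mPo [tuple ('X_(lshift 3 i) : {mpoly K[6]}) | i < 3].
Definition inyK f : {mpoly K[6]} := f \mPo [tuple ('X_(rshift 3 i) : {mpoly K[6]}) | i < 3].
Definition wedgeK f g : {mpoly K[6]} := inxK f * inyK g - inxK g * inyK f.

Lemma wedgeC f g : wedgeK g f = - wedgeK f g.
Proof. by rewrite /wedgeK opprB. Qed.

Lemma inxX (m : 'X_{1..3}) : inxK 'X_[m] = 'X_[xmon m].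
Proof.
rewrite /inxK comp_mpolyX [RHS]mpolyXE_id.
rewrite -[\prod_(i < 6) _]/(\prod_(i < 3 + 3) _) big_split_ord /=.
rewrite [X in _ = _ * X]big1 ?mulr1 => [|i _]; last by rewrite mnmE split_rshift.
by apply: eq_bigr => i _; rewrite tnth_mktuple mnmE split_lshift.
Qed.

Lemma inyX (m : 'X_{1..3}) : inyK 'X_[m] = 'X_[ymon m].
Proof.
rewrite /inyK comp_mpolyX [RHS]mpolyXE_id.
rewrite -[\prod_(i < 6) _]/(\prod_(i < 3 + 3) _) big_split_ord /=.
rewrite [X in _ = X * _]big1 ?mul1r => [|i _]; last by rewrite mnmE split_lshift.
by apply: eq_bigr => i _; rewrite tnth_mktuple mnmE split_rshift.
Qed.

Lemma inx_cubic f : f \is 3.-homog ->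
  inxK f = \sum_(i < 10) f@_(cmon i) *: 'X_[xmon (cmon i)].
Proof.
move=> cf; rewrite {1}(cubicE cf) /inxK raddf_sum /=.
by apply: eq_bigr => i _; rewrite comp_mpolyZ -/(inxK _) inxX.
Qed.

Lemma iny_cubic f : f \is 3.-homog ->
  inyK f = \sum_(i < 10) f@_(cmon i) *: 'X_[ymon (cmon i)].
Proof.
move=> cf; rewrite {1}(cubicE cf) /inyK raddf_sum /=.
by apply: eq_bigr => i _; rewrite comp_mpolyZ -/(inyK _) inyX.
Qed.

Lemma coef_xy (i j a b : 'I_10) :
  ('X_[xmon (cmon i)] * 'X_[ymon (cmon j)] : {mpoly K[6]})@_(cmon2 a b) =
  ((i == a) && (j == b))%:R.
Proof.
rewrite -mpolyXD mcoeffX; congr (_%:R).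
case: eqP => [/cmon2_inj [-> ->]|ne]; first by rewrite !eqxx.
by case: eqP => // eq_ia; case: eqP => // eq_jb; case: ne; rewrite eq_ia eq_jb.
Qed.

Lemma coef_inx_iny f g (a b : 'I_10) : f \is 3.-homog -> g \is 3.-homog ->
  (inxK f * inyK g)@_(cmon2 a b) = f@_(cmon a) * g@_(cmon b).
Proof.
move=> cf cg; rewrite inx_cubic // iny_cubic // mulr_suml raddf_sum /=.
under eq_bigr => i _ do rewrite mulr_sumr raddf_sum /=.
under eq_bigr => i _ do under eq_bigr => j _ do
  rewrite -scalerAr -scalerAl scalerA mcoeffZ coef_xy.
rewrite (bigD1 a) //= [X in X + _](bigD1 b) //= !eqxx mulr1.
rewrite [X in _ + X + _]big1 => [|j /negbTE ne_jb]; last by rewrite ne_jb mulr0.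
rewrite [X in _ + X]big1 => [|i /negbTE ne_ia]; last first.
  by apply: big1 => j _; rewrite ne_ia mulr0.
by rewrite !addr0 mulrC.
Qed.

Lemma coef_wedge f g (a b : 'I_10) : f \is 3.-homog -> g \is 3.-homog ->
  (wedgeK f g)@_(cmon2 a b) = f@_(cmon a) * g@_(cmon b) - g@_(cmon a) * f@_(cmon b).
Proof. by move=> cf cg; rewrite /wedgeK mcoeffB !coef_inx_iny. Qed.

Lemma wedge_expand f g : f \is 3.-homog -> g \is 3.-homog ->
  wedgeK f g = \sum_(i < 10) \sum_(j < 10)
    (f@_(cmon i) * g@_(cmon j)) *: wedgeK 'X_[cmon i] 'X_[cmon j].
Proof.
have xy_sum (c d : 'I_10 -> K) :
    inxK (\sum_(i < 10) c i *: 'X_[cmon i]) * inyK (\sum_(j < 10) d j *: 'X_[cmon j]) =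
    \sum_(i < 10) \sum_(j < 10) (c i * d j) *: (inxK 'X_[cmon i] * inyK 'X_[cmon j]).
  rewrite /inxK /inyK !raddf_sum mulr_suml; apply: eq_bigr => i _ /=.
  rewrite mulr_sumr; apply: eq_bigr => j _ /=.
  by rewrite !comp_mpolyZ -scalerAl -scalerAr scalerA.
move=> cf cg; rewrite {1}/wedgeK [in LHS](cubicE cf) [in LHS](cubicE cg) !xy_sum.
under [RHS]eq_bigr => i _ do (under eq_bigr => j _ do rewrite scalerBr; rewrite sumrB).
rewrite sumrB; congr (_ - _); rewrite exchange_big; apply: eq_bigr => i _.
by apply: eq_bigr => j _; rewrite mulrC.
Qed.

Definition act2K (M : 'M[K]_3) (p : {mpoly K[6]}) : {mpoly K[6]} :=
  p \mPo [tuple (match split (i : 'I_(3 + 3)) with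
                 | inl a => \sum_(j < 3) M a j *: 'X_(lshift 3 j)
                 | inr a => \sum_(j < 3) M a j *: 'X_(rshift 3 j)
                 end : {mpoly K[6]}) | i < 6].

Lemma act2_sum (M : 'M[K]_3) (I : Type) (r : seq I) (F : I -> {mpoly K[6]}) :
  act2K M (\sum_(i <- r) F i) = \sum_(i <- r) act2K M (F i).
Proof. exact: raddf_sum. Qed.

Lemma act2_inx (M : 'M[K]_3) f : act2K M (inxK f) = inxK (subst_mx M f).
Proof.
rewrite /act2K /inxK /subst_mx !comp_mpolyA; congr (f \mPo _).
apply: eq_from_tnth => i; rewrite !tnth_mktuple comp_mpolyXU -tnth_nth tnth_mktuple.
rewrite split_lshift raddf_sum; apply: eq_bigr => j _ /=.
by rewrite comp_mpolyZ comp_mpolyXU -tnth_nth tnth_mktuple.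
Qed.

Lemma act2_iny (M : 'M[K]_3) f : act2K M (inyK f) = inyK (subst_mx M f).
Proof.
rewrite /act2K /inyK /subst_mx !comp_mpolyA; congr (f \mPo _).
apply: eq_from_tnth => i; rewrite !tnth_mktuple comp_mpolyXU -tnth_nth tnth_mktuple.
rewrite split_rshift raddf_sum; apply: eq_bigr => j _ /=.
by rewrite comp_mpolyZ comp_mpolyXU -tnth_nth tnth_mktuple.
Qed.

Lemma act2_wedge (M : 'M[K]_3) f g :
  act2K M (wedgeK f g) = wedgeK (subst_mx M f) (subst_mx M g).
Proof. by rewrite /wedgeK /act2K rmorphB !rmorphM /= -!/(act2K _ _) !act2_inx !act2_iny. Qed.

Definition bwedge (e : 'I_45) : {mpoly K[6]} :=
  let: (i, j) := nth (0, 0)%N upper_pairs e in wedgeK 'X_[cmon i] 'X_[cmon j].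

Definition in_bwedge_span (p : {mpoly K[6]}) : Prop :=
  exists c : 'rV[K]_45, p = \sum_e c 0 e *: bwedge e.

Lemma bwedge_span0 : in_bwedge_span 0.
Proof. by exists 0; rewrite big1 // => e _; rewrite mxE scale0r. Qed.

Lemma bwedge_span_lin a p q :
  in_bwedge_span p -> in_bwedge_span q -> in_bwedge_span (a *: p + q).
Proof.
move=> [c ->] [d ->]; exists (a *: c + d); rewrite scaler_sumr -big_split.
by apply: eq_bigr => e _; rewrite !mxE scalerDl scalerA.
Qed.

Lemma bwedge_spanZ a p : in_bwedge_span p -> in_bwedge_span (a *: p).
Proof. by move=> span_p; rewrite -[_ *: _]addr0; apply: bwedge_span_lin bwedge_span0. Qed.

Lemma bwedge_span_sum (I : Type) (r : seq I) (F : I -> {mpoly K[6]}) :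
  (forall i, in_bwedge_span (F i)) -> in_bwedge_span (\sum_(i <- r) F i).
Proof.
move=> spanF; elim/big_rec: _ => [|i p _ span_p]; first exact: bwedge_span0.
by rewrite -[F i]scale1r; apply: bwedge_span_lin.
Qed.

Lemma wedge_cmon_span (i j : 'I_10) : in_bwedge_span (wedgeK 'X_[cmon i] 'X_[cmon j]).
Proof.
have bwedge_in e : in_bwedge_span (bwedge e).
  exists (delta_mx 0 e); rewrite (bigD1 e) //= mxE !eqxx scale1r big1 ?addr0 // => e' ne_e'.
  by rewrite mxE (negbTE ne_e') andbF scale0r.
case: (ltngtP i j) => [lt_ij | lt_ji | /val_inj <-].
- by have [e eq_e] := upper_pairs_index lt_ij; move: (bwedge_in e); rewrite /bwedge eq_e.
- have [e eq_e] := upper_pairs_index lt_ji.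
  rewrite wedgeC -scaleN1r; apply: bwedge_spanZ.
  by move: (bwedge_in e); rewrite /bwedge eq_e.
- by rewrite /wedgeK subrr; apply: bwedge_span0.
Qed.

Lemma wedge_span f g : f \is 3.-homog -> g \is 3.-homog -> in_bwedge_span (wedgeK f g).
Proof.
move=> cf cg; rewrite wedge_expand //.
by do 2![apply: bwedge_span_sum => ?]; apply/bwedge_spanZ/wedge_cmon_span.
Qed.

Lemma bwedge_coords (d : nat) (b : 'I_d -> {mpoly K[6]}) :
  (forall i, in_bwedge_span (b i)) ->
  exists B : 'M[K]_(d, 45), forall x : 'rV[K]_d,
    \sum_i x 0 i *: b i = \sum_e (x *m B) 0 e *: bwedge e.
Proof.
move=> /fin_all_exists [cb cbE]; exists (\matrix_(i, e) cb i 0 e) => x.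
under eq_bigr => i _ do rewrite cbE scaler_sumr.
rewrite exchange_big; apply: eq_bigr => e _; rewrite !mxE scaler_suml.
by apply: eq_bigr => i _; rewrite !mxE scalerA.
Qed.

Definition is_RK (R : {mpoly K[3]} -> {mpoly K[3]} -> {mpoly K[3]} -> K) : Prop :=
  [/\ (forall a f f' g h, f \is 3.-homog -> f' \is 3.-homog -> g \is 3.-homog ->
         h \is 3.-homog -> R (a *: f + f') g h = a * R f g h + R f' g h),
      (forall a f g g' h, f \is 3.-homog -> g \is 3.-homog -> g' \is 3.-homog ->
         h \is 3.-homog -> R f (a *: g + g') h = a * R f g h + R f g' h),
      (forall a f g h h', f \is 3.-homog -> g \is 3.-homog -> h \is 3.-homog ->
         h' \is 3.-homog -> R f g (a *: h + h') = a * R f g h + R f g h'),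
      (forall f g, f \is 3.-homog -> g \is 3.-homog ->
         [/\ R f f g = 0, R f g f = 0 & R g f f = 0]) &
      (forall l m n : 'rV[K]_3,
         R (linformK l ^+ 3) (linformK m ^+ 3) (linformK n ^+ 3) = det3K l m n ^+ 3)].

Lemma sum_on_cubics (phi : {mpoly K[3]} -> K) :
  (forall a f f', f \is 3.-homog -> f' \is 3.-homog ->
     phi (a *: f + f') = a * phi f + phi f') ->
  forall (I : Type) (r : seq I) (c : I -> K) (F : I -> {mpoly K[3]}),
  (forall i, F i \is 3.-homog) -> phi (\sum_(i <- r) c i *: F i) = \sum_(i <- r) c i * phi (F i).
Proof.
move=> phi_lin I r c F cF; elim: r => [|i r IHr].
  have := phi_lin 1 0 0 (rpred0 _) (rpred0 _).
  rewrite !big_nil scale1r addr0 mul1r => phi00.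
  by apply: (@addrI _ (phi 0)); rewrite addr0 -phi00.
rewrite !big_cons phi_lin ?IHr //; apply: rpred_sum => j _; exact: rpredZ.
Qed.

Section AlternatingForm.
Variable R : {mpoly K[3]} -> {mpoly K[3]} -> {mpoly K[3]} -> K.
Hypothesis HR : is_RK R.

Lemma R_sum1 (I : Type) (r : seq I) (c : I -> K) (F : I -> {mpoly K[3]}) g h :
  (forall i, F i \is 3.-homog) -> g \is 3.-homog -> h \is 3.-homog ->
  R (\sum_(i <- r) c i *: F i) g h = \sum_(i <- r) c i * R (F i) g h.
Proof.
by case: HR => lin1 _ _ _ _ cF cg ch; apply: (@sum_on_cubics (R^~ g ^~ h)) => // *; apply: lin1.
Qed.

Lemma R_sum2 (I : Type) (r : seq I) (c : I -> K) (F : I -> {mpoly K[3]}) f h :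
  (forall i, F i \is 3.-homog) -> f \is 3.-homog -> h \is 3.-homog ->
  R f (\sum_(i <- r) c i *: F i) h = \sum_(i <- r) c i * R f (F i) h.
Proof.
by case: HR => _ lin2 _ _ _ cF cf ch; apply: (@sum_on_cubics (R f ^~ h)) => // *; apply: lin2.
Qed.

Lemma R_sum3 (I : Type) (r : seq I) (c : I -> K) (F : I -> {mpoly K[3]}) f g :
  (forall i, F i \is 3.-homog) -> f \is 3.-homog -> g \is 3.-homog ->
  R f g (\sum_(i <- r) c i *: F i) = \sum_(i <- r) c i * R f g (F i).
Proof.
by case: HR => _ _ lin3 _ _ cF cf cg; apply: (@sum_on_cubics (R f g)) => // *; apply: lin3.
Qed.

Lemma R_swap f g h : f \is 3.-homog -> g \is 3.-homog -> h \is 3.-homog ->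
  R g f h = - R f g h.
Proof.
case: HR => lin1 lin2 _ alt _ cf cg ch.
have [Efg _ _] := alt _ _ (rpredD cf cg) ch.
have [Ef _ _] := alt _ _ cf ch; have [Eg _ _] := alt _ _ cg ch.
have expand u : u \is 3.-homog -> R u (f + g) h = R u f h + R u g h.
  by move=> cu; rewrite -{1}[f]scale1r lin2 // mul1r.
have := lin1 1 f g (f + g) h cf cg (rpredD cf cg) ch.
rewrite scale1r Efg mul1r !expand // Ef Eg add0r addr0 => /eqP.
by rewrite eq_sym addr_eq0 => /eqP ->; rewrite opprK.
Qed.

Lemma R_expand f g h : f \is 3.-homog -> g \is 3.-homog -> h \is 3.-homog ->
  R f g h =
    \sum_(i < 10) \sum_(j < 10) f@_(cmon i) * g@_(cmon j) * R 'X_[cmon i] 'X_[cmon j] h.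
Proof.
move=> cf cg ch; rewrite [in LHS](cubicE cf) (R_sum1 _ _ cubic_cmon) //.
apply: eq_bigr => i _; rewrite [in LHS](cubicE cg) (R_sum2 _ _ cubic_cmon) ?cubic_cmon //.
by rewrite mulr_sumr; apply: eq_bigr => j _; rewrite mulrA.
Qed.

(* The map Λ² Sym³ -> (Sym³)^* of the paper, read off the coefficients of p at the
   monomials x^a y^b; [Phi_wedge] shows that it sends f ∧ g to 2 R(f, g, -). *)
Definition Phi (p : {mpoly K[6]}) h : K :=
  \sum_(i < 10) \sum_(j < 10) p@_(cmon2 i j) * R 'X_[cmon i] 'X_[cmon j] h.

Lemma Phi_lin a p q h : Phi (a *: p + q) h = a * Phi p h + Phi q h.
Proof.
rewrite /Phi mulr_sumr -big_split; apply: eq_bigr => i _ /=.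
rewrite mulr_sumr -big_split; apply: eq_bigr => j _ /=.
by rewrite mcoeffD mcoeffZ mulrDl mulrA.
Qed.

Lemma Phi0 h : Phi 0 h = 0.
Proof. by rewrite /Phi big1 // => i _; rewrite big1 // => j _; rewrite mcoeff0 mul0r. Qed.

Lemma PhiZ a p h : Phi (a *: p) h = a * Phi p h.
Proof. by rewrite -[a *: p]addr0 Phi_lin Phi0 addr0. Qed.

Lemma Phi_sum (I : Type) (r : seq I) (F : I -> {mpoly K[6]}) h :
  Phi (\sum_(i <- r) F i) h = \sum_(i <- r) Phi (F i) h.
Proof.
elim: r => [|i r IHr]; last by rewrite !big_cons -IHr -[in LHS](scale1r (F i)) Phi_lin mul1r.
by rewrite !big_nil Phi0.
Qed.

Lemma Phi_wedge f g h : f \is 3.-homog -> g \is 3.-homog -> h \is 3.-homog ->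
  Phi (wedgeK f g) h = 2%:R * R f g h.
Proof.
move=> cf cg ch; rewrite /Phi.
under eq_bigr => i _ do under eq_bigr => j _ do rewrite coef_wedge // mulrBl.
under eq_bigr => i _ do rewrite sumrB.
by rewrite sumrB -!R_expand // (R_swap cf cg ch) opprK mulr2n mulrDl mul1r.
Qed.

Lemma Phi_cubic p h : h \is 3.-homog ->
  Phi p h = \sum_(k < 10) h@_(cmon k) * Phi p 'X_[cmon k].
Proof.
move=> ch; have R_h (i j : 'I_10) : R 'X_[cmon i] 'X_[cmon j] h =
    \sum_(k < 10) h@_(cmon k) * R 'X_[cmon i] 'X_[cmon j] 'X_[cmon k].
  by rewrite [in LHS](cubicE ch) (R_sum3 _ _ cubic_cmon) ?cubic_cmon.
rewrite /Phi; under eq_bigr => i _ do under eq_bigr => j _ do rewrite R_h mulr_sumr.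
under [RHS]eq_bigr => k _ do (rewrite mulr_sumr; under eq_bigr => i _ do rewrite mulr_sumr).
rewrite [RHS]exchange_big; apply: eq_bigr => i _ /=.
rewrite [RHS]exchange_big; apply: eq_bigr => j _ /=.
by apply: eq_bigr => k _; rewrite mulrCA.
Qed.

Lemma R_cubes l m n :
  R (linformK l ^+ 3) (linformK m ^+ 3) (linformK n ^+ 3) = det3K l m n ^+ 3.
Proof. by case: HR. Qed.

Lemma R_cube_sums (u v w : 'I_10 -> 'rV[K]_3) (a b c : 'I_10 -> K) :
  R (\sum_i a i *: linformK (u i) ^+ 3) (\sum_j b j *: linformK (v j) ^+ 3)
    (\sum_k c k *: linformK (w k) ^+ 3) =
  \sum_i \sum_j \sum_k a i * b j * c k * det3K (u i) (v j) (w k) ^+ 3.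
Proof.
have cubes (d : 'I_10 -> K) (t : 'I_10 -> 'rV[K]_3) :
    \sum_k d k *: linformK (t k) ^+ 3 \is 3.-homog.
  by apply: rpred_sum => k _; rewrite rpredZ // cubic_linform_cube.
have cube t := cubic_linform_cube t.
rewrite R_sum1 //; apply: eq_bigr => i _; rewrite R_sum2 // mulr_sumr; apply: eq_bigr => j _.
rewrite R_sum3 // !mulr_sumr; apply: eq_bigr => k _.
by rewrite R_cubes !mulrA.
Qed.

Lemma R_subst_mx (M : 'M[K]_3) f g h :
  f \is 3.-homog -> g \is 3.-homog -> h \is 3.-homog ->
  R (subst_mx M f) (subst_mx M g) (subst_mx M h) = \det M ^+ 3 * R f g h.
Proof.
move=> /cube_span [a ->] /cube_span [b ->] /cube_span [c ->]; rewrite !subst_mx_sum /cube.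
under eq_bigr => i _ do rewrite subst_mx_cube.
under [in X in R _ X _]eq_bigr => j _ do rewrite subst_mx_cube.
under [in X in R _ _ X]eq_bigr => k _ do rewrite subst_mx_cube.
rewrite !R_cube_sums !mulr_sumr; apply: eq_bigr => i _; rewrite !mulr_sumr.
apply: eq_bigr => j _; rewrite !mulr_sumr; apply: eq_bigr => k _.
by rewrite det3_mulmx exprMn mulrA [LHS]mulrC.
Qed.

Lemma R_cubes_eval l m h : h \is 3.-homog ->
  R (linformK l ^+ 3) (linformK m ^+ 3) h = h.@[cross l m].
Proof.
move=> /cube_span [c ->]; have cubes k : cube k \is 3.-homog := cubic_linform_cube _.
rewrite R_sum3 ?cubic_linform_cube // raddf_sum /=.
by apply: eq_bigr => k _; rewrite mevalZ R_cubes det3_cross rmorphXn.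
Qed.

Lemma Phi_act2 (M : 'M[K]_3) (k : nat) (a b : 'I_k -> {mpoly K[3]}) h :
  \det M = 1 -> (forall i, a i \is 3.-homog /\ b i \is 3.-homog) -> h \is 3.-homog ->
  Phi (act2K M (\sum_(i < k) wedgeK (a i) (b i))) (subst_mx M h) =
  Phi (\sum_(i < k) wedgeK (a i) (b i)) h.
Proof.
move=> detM1 cab ch; rewrite act2_sum !Phi_sum; apply: eq_bigr => i _.
have [ca cb] := cab i; rewrite act2_wedge !Phi_wedge ?subst_mx_cubic //.
by rewrite R_subst_mx // detM1 expr1n mul1r.
Qed.

Definition Phi_row (p : {mpoly K[6]}) : 'rV[K]_10 := \row_(k < 10) Phi p 'X_[cmon k].

Definition Phi_mx : 'M[K]_(45, 10) := \matrix_(e < 45, k < 10) Phi (bwedge e) 'X_[cmon k].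

Lemma Phi_row_span (c : 'rV[K]_45) : Phi_row (\sum_e c 0 e *: bwedge e) = c *m Phi_mx.
Proof.
by apply/rowP => k; rewrite !mxE Phi_sum; apply: eq_bigr => e _; rewrite PhiZ !mxE.
Qed.

Lemma Phi_row_eq0 p h : Phi_row p = 0 -> h \is 3.-homog -> Phi p h = 0.
Proof.
move=> Pp0 ch; rewrite Phi_cubic // big1 // => k _.
by have := congr1 (fun r : 'rV[K]_10 => r 0 k) Pp0; rewrite !mxE => ->; rewrite mulr0.
Qed.

Lemma Phi_mx_full : row_full Phi_mx.
Proof.
rewrite -sub1mx; apply: (submx_trans (B := node_mx)).
  by rewrite sub1mx row_full_unit node_mx_unit.
apply/row_subP => k; have [l [m cross_lm]] := cross_surj (node k 0).
have [c wedge_lm] := wedge_span (cubic_linform_cube l) (cubic_linform_cube m).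
have two_ne0 : (2%:R : K) != 0 by rewrite pnatr_eq0.
have -> : row k node_mx = 2%:R^-1 *: Phi_row (wedgeK (linformK l ^+ 3) (linformK m ^+ 3)).
  apply/rowP => i; rewrite !mxE Phi_wedge ?cubic_linform_cube ?cubic_cmon //.
  by rewrite R_cubes_eval ?cubic_cmon // (meval_eq _ cross_lm) mulKf.
by rewrite wedge_lm Phi_row_span scalemx_sub ?submxMl.
Qed.

End AlternatingForm.

End CubicForms.

Arguments bwedge {K}.

Lemma Lambda2_span p : in_Lambda2 p -> in_bwedge_span p.
Proof.
case=> k [a [b [cab ->]]]; apply: bwedge_span_sum => i.
by have [ca cb] := cab i; apply: wedge_span.
Qed.

Section SummandS51.
Variable R : {mpoly CC[3]} -> {mpoly CC[3]} -> {mpoly CC[3]} -> CC.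
Hypothesis HR : is_R R.
Variable W : {mpoly CC[6]} -> Prop.
Hypothesis HW : is_S51 W.

Lemma S51_subspace : lin_subspace W.
Proof.
have [_ [b [_ b_span]] _ _] := HW; split.
  by apply/b_span; exists (fun=> 0); rewrite big1 // => i _; rewrite scale0r.
move=> a u v /b_span [c ->] /b_span [d ->]; apply/b_span; exists (fun i => a * c i + d i).
by rewrite scaler_sumr -big_split; apply: eq_bigr => i _; rewrite scalerDl scalerA.
Qed.

Lemma S51_ker u : W u -> forall h, is_cubic h -> Phi R u h = 0.
Proof.
move=> Wu.
have [W_L2 [b [b_free b_span]] W_inv [_ W_irr]] := HW.
pose V u := W u /\ forall h, is_cubic h -> Phi R u h = 0.
have V_sub : lin_subspace V.
  have [W0 W_lin] := S51_subspace; split; first by split=> // h _; rewrite Phi0.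
  move=> a v w [Wv Pv] [Ww Pw]; split; first exact: W_lin.
  by move=> h ch; rewrite Phi_lin Pv // Pw // mulr0 addr0.
have V_inv : SL3_invariant V.
  move=> M detM v [Wv Pv]; split; first exact: W_inv.
  have unitM : M \in unitmx by rewrite unitmxE detM unitr1.
  move=> h ch; have [h' ch' ->] := subst_mx_surj unitM ch.
  have [k [f [g [cfg v_fg]]]] := W_L2 v Wv; move: Pv; rewrite v_fg => Pv.
  by rewrite (Phi_act2 HR) // Pv.
have [V0|WV] := W_irr V V_sub V_inv (fun v Vv => Vv.1); last by case/WV: Wu.
(* Otherwise Phi would embed the 35-dimensional W into the 10-dimensional (Sym³)^*. *)
pose G : 'M[CC]_(35, 10) := \matrix_(i, k) Phi R (b i) 'X_[cmon k].
suff : row_free G by rewrite /row_free => /eqP rankG; have := rank_leq_col G; rewrite rankG.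
apply/inj_row_free => x xG0; apply/rowP => i; rewrite mxE; move: i; apply: b_free.
apply: V0; split; first by apply/b_span; exists (x 0).
move=> h; apply: (Phi_row_eq0 HR); apply/rowP => k.
rewrite -[RHS](congr1 (fun r : 'rV_10 => r 0 k) xG0).
by rewrite !mxE Phi_sum; apply: eq_bigr => i _; rewrite PhiZ !mxE.
Qed.

Lemma S51_of_ker p : in_Lambda2 p -> Phi_row R p = 0 -> W p.
Proof.
move=> L2p Pp0; have [W_L2 [b [b_free b_span]] _ _] := HW.
have [B BE] : exists B : 'M[CC]_(35, 45), forall x : 'rV_35,
    \sum_i x 0 i *: b i = \sum_e (x *m B) 0 e *: bwedge e.
  apply: bwedge_coords => i; apply/Lambda2_span/W_L2/b_span.
  exists (fun j => (j == i)%:R); rewrite (bigD1 i) //= eqxx scale1r.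
  by rewrite big1 ?addr0 // => j /negbTE ->; rewrite scale0r.
have freeB : row_free B.
  apply/inj_row_free => x xB0; apply/rowP => i; rewrite mxE; move: i; apply: b_free.
  by rewrite BE xB0 big1 // => e _; rewrite mxE scale0r.
have BP0 : B *m Phi_mx R = 0.
  apply/row_matrixP => i; rewrite row_mul row0 rowE -Phi_row_span; apply/rowP => k.
  rewrite !mxE -(BE (delta_mx 0 i)); apply: S51_ker; last exact: cubic_cmon.
  by apply/b_span; exists ((delta_mx 0 i : 'rV_35) 0).
have [c pE] := Lambda2_span L2p.
(* W lies in the kernel of Phi on Λ², which has dimension 45 - 10 = 35 = dim W. *)
have /submxP [y cE] : (c <= B)%MS.
  apply: (sub_ker_of_rank freeB BP0 (Phi_mx_full HR) (erefl 45%N)).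
  by rewrite -Phi_row_span -pE.
by apply/b_span; exists (y 0); rewrite BE -cE.
Qed.

End SummandS51.

Definition npairs := #|{: 'I_10 * 'I_10}|.

Definition pair_of (e : 'I_npairs) : 'I_10 * 'I_10 := @enum_val _ (pred_of_simpl predT) e.

Definition Phi_poly (R : {mpoly CC[3]} -> {mpoly CC[3]} -> {mpoly CC[3]} -> CC) (k : 'I_10) :
  {mpoly CC[npairs]} :=
  \sum_(e < npairs) R 'X_[cmon (pair_of e).1] 'X_[cmon (pair_of e).2] 'X_[cmon k] *: 'X_e.

Lemma Phi_poly_eval R k (p : {mpoly CC[6]}) :
  (Phi_poly R k).@[fun e => p@_(cmon2 (pair_of e).1 (pair_of e).2)] = Phi R p 'X_[cmon k].
Proof.
rewrite /Phi_poly raddf_sum /=; under eq_bigr => e _ do rewrite mevalZ mevalXU.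
pose F (ij : 'I_10 * 'I_10) :=
  R 'X_[cmon ij.1] 'X_[cmon ij.2] 'X_[cmon k] * p@_(cmon2 ij.1 ij.2).
rewrite -(big_enum_val (A := pred_of_simpl predT) F) /F /Phi pair_big /=.
by apply: eq_bigr => -[i j] _; rewrite mulrC.
Qed.

Theorem mainTheorem11
  (R : {mpoly CC[3]} -> {mpoly CC[3]} -> {mpoly CC[3]} -> CC) (HR : is_R R)
  (W : {mpoly CC[6]} -> Prop) (HW : is_S51 W)
  (f0 g0 : {mpoly CC[3]}) (Hf0 : is_cubic f0) (Hg0 : is_cubic g0)
  (Hfg0 : indep f0 g0) :
  W (wedge f0 g0) <-> in_N R f0 g0.
Proof.
split=> [W_fg0 k ms P vanish_P | N_fg0].
  apply: vanish_P => // h ch; have := S51_ker HR HW W_fg0 ch.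
  by rewrite (Phi_wedge HR) // => /eqP; rewrite mulf_eq0 pnatr_eq0 => /eqP.
apply: (S51_of_ker HR HW); first by exists 1%N, (fun=> f0), (fun=> g0); rewrite big_ord1.
apply/rowP => k; rewrite !mxE -Phi_poly_eval; apply: N_fg0 => f g cf cg _ Rfg0.
by rewrite Phi_poly_eval (Phi_wedge HR) ?Rfg0 ?mulr0 //; apply: cubic_cmon.
Qed.
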